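(* Let $0<r<1$ and $0\le\phi\le\pi/2$, and let $\{\rho_{\theta(\eta)}:\eta\in H\subset\mathbb{R}^2\}$ be a two-parameter smooth submodel of the full qubit model such that at some $\eta_0$ one has $\rho_{\theta(\eta_0)}=\rho_{(0,0,r)}$ and $$D_1:=\partial_{\eta^1}\rho_{\theta(\eta)}\big|_{\eta_0}=\sigma_1,\qquad D_2:=\partial_{\eta^2}\rho_{\theta(\eta)}\big|_{\eta_0}=\cos\phi\,\sigma_2+\sin\phi\sqrt{1-r^2}\,\sigma_3 .$$ Let $G=\begin{pmatrix}g_1&g_2\\ g_2&g_3\end{pmatrix}$ be real symmetric positive definite. Then the Holevo bound of this submodel at $\eta_0$ is $$C^H(G)=\mathrm{tr}\,G+2r\cos\phi\sqrt{\det G}-r^2\sin^2\phi\,g_1\qquad\text{if } r\,g_1\sin^2\phi<\sqrt{\det G}\cos\phi,$$ and $$C^H(G)=\mathrm{tr}\,G+\frac{\det G}{g_1}\Big(\frac{\cos\phi}{\sin\phi}\Big)^2\qquad\text{otherwise}.$$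
   Context: Full qubit model: $\rho_\theta=\frac12I+\sum_{i=1}^3\theta^i\sigma_i$ on $\mathbb{C}^2$, $\|\theta\|<1$, with $\sigma_1=\frac12\begin{pmatrix}0&1\\1&0\end{pmatrix}$, $\sigma_2=\frac12\begin{pmatrix}0&-i\\i&0\end{pmatrix}$, $\sigma_3=\frac12\begin{pmatrix}1&0\\0&-1\end{pmatrix}$. For a pair $\vec X=(X^1,X^2)$ of Hermitian $2\times2$ matrices, $Z^{k,j}(\vec X)=\mathrm{Tr}\,\rho_{(0,0,r)}X^kX^j$ and $C(G,\vec X)=\mathrm{tr}\sqrt G\,\mathrm{Re}Z(\vec X)\sqrt G+\mathrm{tr}|\sqrt G\,\mathrm{Im}Z(\vec X)\sqrt G|$, where $\mathrm{Re}W=(W+\bar W)/2$, $\mathrm{Im}W=(W-\bar W)/(2i)$, $|A|=(A^*A)^{1/2}$. The Holevo bound of the submodel at $\eta_0$ is $C^H(G)=\min\{C(G,\vec X):\mathrm{Tr}\,D_kX^j=\delta^j_k,\ j,k=1,2\}$. *)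

From mathcomp Require Import all_boot all_order all_algebra.
From mathcomp Require Import complex.
From mathcomp Require Import all_classical all_reals all_analysis.
Set Implicit Arguments. Unset Strict Implicit. Unset Printing Implicit Defensive.
Import Order.TTheory GRing.Theory Num.Theory ComplexField.
Local Open Scope ring_scope.
Local Open Scope complex_scope.

Section Qubit.
Variable R : realType.

(* Pauli matrices with the factor 1/2, as in the paper. *)
Definition sigma1 : 'M[R[i]]_2 :=
  \matrix_(a < 2, b < 2) (if a == b then 0 else 1 / 2).
Definition sigma2 : 'M[R[i]]_2 :=
  \matrix_(a < 2, b < 2)
    (if a == b then 0 else if (a == 0 :> nat) then - 'i / 2 else 'i / 2).
Definition sigma3 : 'M[R[i]]_2 :=
  \matrix_(a < 2, b < 2)
    (if a == b then (if (a == 0 :> nat) then 1 / 2 else - 1 / 2) else 0).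

Definition rho_theta (t1 t2 t3 : R) : 'M[R[i]]_2 :=
  (1 / 2) *: 1%:M + t1%:C *: sigma1 + t2%:C *: sigma2 + t3%:C *: sigma3.

Definition adjmx n (A : 'M[R[i]]_n) : 'M[R[i]]_n := (map_mx (fun z => z^*) A)^T.
Definition hermitian n (A : 'M[R[i]]_n) := adjmx A = A.

Definition Zmat (r : R) (X : 'I_2 -> 'M[R[i]]_2) : 'M[R[i]]_2 :=
  \matrix_(k < 2, j < 2) \tr (rho_theta 0 0 r *m X k *m X j).

(* Re W = (W + conj W)/2 and Im W = (W - conj W)/(2i), entrywise; these are
   real-valued, and we record them as real matrices. *)
Definition ReM n (W : 'M[R[i]]_n) : 'M[R]_n :=
  \matrix_(a < n, b < n) complex.Re ((W a b + (W a b)^*) / 2).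
Definition ImM n (W : 'M[R[i]]_n) : 'M[R]_n :=
  \matrix_(a < n, b < n) complex.Re ((W a b - (W a b)^*) / (2 * 'i)).

Definition psd n (A : 'M[R]_n) :=
  A^T = A /\ forall v : 'cV[R]_n, 0 <= (v^T *m A *m v) 0 0.
Definition posdef n (A : 'M[R]_n) :=
  A^T = A /\ forall v : 'cV[R]_n, v != 0 -> 0 < (v^T *m A *m v) 0 0.

Definition msqrt n (A : 'M[R]_n) : 'M[R]_n :=
  xget 0 [set S | psd S /\ S *m S = A].
Definition mabs n (A : 'M[R]_n) : 'M[R]_n := msqrt (A^T *m A).

Definition Ccost (r : R) (G : 'M[R]_2) (X : 'I_2 -> 'M[R[i]]_2) : R :=
  \tr (msqrt G *m ReM (Zmat r X) *m msqrt G)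
  + \tr (mabs (msqrt G *m ImM (Zmat r X) *m msqrt G)).

Definition feasible (D : 'I_2 -> 'M[R[i]]_2) (X : 'I_2 -> 'M[R[i]]_2) :=
  (forall j, hermitian (X j)) /\
  (forall j k : 'I_2, \tr (D k *m X j) = (j == k)%:R).

Definition holevo_bound_is (r : R) (D : 'I_2 -> 'M[R[i]]_2) (G : 'M[R]_2) (v : R) :=
  (exists X, feasible D X /\ Ccost r G X = v) /\
  (forall X, feasible D X -> v <= Ccost r G X).

Definition Dsub (r phi : R) (k : 'I_2) : 'M[R[i]]_2 :=
  if k == 0 :> nat then sigma1
  else (cos phi)%:C *: sigma2 + (sin phi * Num.sqrt (1 - r ^+ 2))%:C *: sigma3.

End Qubit.

(* The locally unbiased observables are X^j = a_j I + 2 (x_j . sigma).  Rotating the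
   plane of the (sigma_2, sigma_3)-coordinates by phi turns the constraints Tr D_k X^j =
   delta^j_k into fixing one coordinate of each X^j, leaving free vectors y, v in R^2
   (with tau = v_2) such that Re Z = I + y y^T + v v^T, while Im Z is skew-symmetric with
   off-diagonal entry r (cos phi - tau sin phi).  Since sqrt G B sqrt G = sqrt(det G) B for a
   2x2 skew-symmetric B, this gives
     C(G, X) = tr G + y^T G y + v^T G v + 2 r |cos phi - tau sin phi| sqrt(det G).
   Minimising over y and over the first coordinate of v (a Schur complement) leaves the
   convex one-variable problem min_tau det G tau^2 / g_1 + 2 r sqrt(det G) |cos phi - tau sin phi|,
   whose minimum is at a critical point or, when that point is not admissible, at the kink. *)

From Pilot Require Import Defs.
From mathcomp Require Import all_boot all_order all_algebra.
From mathcomp Require Import complex.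
From mathcomp Require Import all_classical all_reals all_analysis.
From mathcomp Require Import ring lra.
Set Implicit Arguments. Unset Strict Implicit. Unset Printing Implicit Defensive.
Import Order.TTheory GRing.Theory Num.Theory ComplexField.
Local Open Scope ring_scope.

Section Matrix2.
Variable T : pzRingType.
Implicit Types (a b c d e f g h x y : T) (M : 'M[T]_2).

Definition mx2 a b c d : 'M[T]_2 :=
  \matrix_(i, j) if i == 0 then (if j == 0 then a else b)
                 else (if j == 0 then c else d).

Definition col2 x y : 'cV[T]_2 := \col_i (if i == 0 then x else y).

Lemma ord2P (i : 'I_2) : i = 0 \/ i = 1.
Proof. by case: i => [[|[|n]] //= Hi]; [left|right]; apply: val_inj. Qed.

Ltac entrywise :=
  let i := fresh "i" in let j := fresh "j" in
  apply/matrixP => i j; rewrite !mxE;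
  case: (ord2P i) => ->; case: (ord2P j) => ->.

Lemma mx2_eta M : M = mx2 (M 0 0) (M 0 1) (M 1 0) (M 1 1).
Proof. by entrywise. Qed.

Lemma col2_eta (v : 'cV[T]_2) : v = col2 (v 0 0) (v 1 0).
Proof. by apply/matrixP => i j; rewrite !mxE (ord1 j); case: (ord2P i) => ->. Qed.

Lemma addmx_mx2 a b c d e f g h :
  mx2 a b c d + mx2 e f g h = mx2 (a + e) (b + f) (c + g) (d + h).
Proof. by entrywise. Qed.

Lemma scalemx_mx2 k a b c d : k *: mx2 a b c d = mx2 (k * a) (k * b) (k * c) (k * d).
Proof. by entrywise. Qed.

Lemma scalar_mx2 k : k%:M = mx2 k 0 0 k.
Proof. by entrywise. Qed.

Lemma trmx_mx2 a b c d : (mx2 a b c d)^T = mx2 a c b d.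
Proof. by entrywise. Qed.

Lemma mulmx_mx2 a b c d e f g h :
  mx2 a b c d *m mx2 e f g h =
  mx2 (a * e + b * g) (a * f + b * h) (c * e + d * g) (c * f + d * h).
Proof.
apply/matrixP => i j; rewrite !mxE !big_ord_recl big_ord0 !mxE addr0.
by case: (ord2P i) => ->; case: (ord2P j) => ->.
Qed.

Lemma mxtrace_mx2 a b c d : \tr (mx2 a b c d) = a + d.
Proof. by rewrite /mxtrace !big_ord_recl big_ord0 !mxE addr0. Qed.

End Matrix2.

Lemma det_mx2 (T : comPzRingType) (a b c d : T) : \det (mx2 a b c d) = a * d - b * c.
Proof.
rewrite (expand_det_row _ 0) !big_ord_recl big_ord0 /cofactor !det_mx11 !mxE /=.
by rewrite addr0 expr0 expr1 mul1r mulN1r mulrN.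
Qed.

Section RealSymmetric2.
Variable R : realType.
Implicit Types (a b p q t x y : R) (G S : 'M[R]_2).

Definition qform n (A : 'M[R]_n) (v : 'cV[R]_n) : R := (v^T *m A *m v) 0 0.

Lemma qform_col2 p q q' t x y :
  qform (mx2 p q q' t) (col2 x y) = p * x ^+ 2 + (q + q') * x * y + t * y ^+ 2.
Proof.
rewrite /qform !mxE !big_ord_recl !big_ord0 !mxE !big_ord_recl !big_ord0 !mxE /=.
ring.
Qed.

Lemma mxtrace_mul_outer n (A : 'M[R]_n) (u : 'cV[R]_n) :
  \tr (A *m (u *m u^T)) = qform A u.
Proof. by rewrite mulmxA mxtrace_mulC trace_mx11 /qform mulmxA. Qed.

Lemma posdef_psd n (A : 'M[R]_n) : posdef A -> psd A.
Proof.
case=> AT Apos; split=> // v; have [->|/Apos/ltW//] := eqVneq v 0.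
by rewrite /qform trmx0 !mul0mx mxE.
Qed.

Lemma psd_mx2 p q q' t : psd (mx2 p q q' t) ->
  [/\ q' = q, 0 <= p, 0 <= t & `|2 * q| <= p + t].
Proof.
case=> /(congr1 (fun M : 'M[R]_2 => M 0 1)); rewrite !mxE /= => -> qf.
have := qf (col2 1 0); have := qf (col2 0 1); have := qf (col2 1 1);
have := qf (col2 1 (-1)); rewrite -!/(qform _ _) !qform_col2.
move=> h1 h2 h3 h4; split=> //; [nra|nra|rewrite ler_norml; apply/andP; split; nra].
Qed.

Lemma posdef_mx2 G : posdef G ->
  [/\ G 1 0 = G 0 1, 0 < G 0 0, 0 < \det G & \det G = G 0 0 * G 1 1 - G 0 1 ^+ 2].
Proof.
case=> GT Gpos.
have G10 : G 1 0 = G 0 1 by have := congr1 (fun M : 'M[R]_2 => M 0 1) GT; rewrite !mxE.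
have detG : \det G = G 0 0 * G 1 1 - G 0 1 ^+ 2 by rewrite [G in LHS]mx2_eta det_mx2 G10.
have qfG x y : (x != 0) || (y != 0) -> 0 < qform G (col2 x y).
  move=> xy0; apply: Gpos; apply: contraTneq xy0 => /matrixP v0.
  by have := v0 0 0; have := v0 1 0; rewrite !mxE /= => -> ->; rewrite eqxx.
have g1_gt0 : 0 < G 0 0.
  by have := qfG 1 0; rewrite oner_neq0 => /(_ isT); rewrite [G in qform G]mx2_eta qform_col2; nra.
split=> //; rewrite detG -(pmulr_rgt0 _ g1_gt0).
have := qfG (- G 0 1) (G 0 0); rewrite (lt0r_neq0 g1_gt0) orbT => /(_ isT).
rewrite [G in qform G]mx2_eta qform_col2 G10; nra.
Qed.

Lemma psd_sym_mx2 p q t :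
  (forall x y, 0 <= p * x ^+ 2 + 2 * q * x * y + t * y ^+ 2) -> psd (mx2 p q q t).
Proof.
move=> qf; split=> [|v]; first by rewrite trmx_mx2.
by rewrite [v]col2_eta -/(qform _ _) qform_col2 -mulr2n -mulr_natl.
Qed.

Lemma msqrt_scalar2 a : 0 <= a -> msqrt (mx2 a 0 0 a) = mx2 (Num.sqrt a) 0 0 (Num.sqrt a).
Proof.
move=> a_ge0; have sqrt_ge0 := sqrtr_ge0 a.
apply: xget_unique.
  split; first by apply: psd_sym_mx2 => x y; nra.
  by rewrite mulmx_mx2 !(mul0r, mulr0, addr0, add0r) -expr2 sqr_sqrtr.
move=> S [S_psd S2]; move: S_psd S2; rewrite [S]mx2_eta.
move: (S 0 0) (S 0 1) (S 1 0) (S 1 1) => p q q' t /psd_mx2 [-> p_ge0 t_ge0 q_le].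
rewrite mulmx_mx2 => /matrixP S2.
have := S2 0 0; have := S2 0 1; have := S2 1 1; rewrite !mxE /= => e11 e01 e00.
have q0 : q = 0.
  have [pt0|] := eqVneq (p + t) 0; last by move=> pt0; apply/(mulIf pt0); rewrite mul0r -e01; ring.
  by move: q_le; rewrite pt0 normr_le0 mulf_eq0 pnatr_eq0 => /eqP.
have sq u : 0 <= u -> u * u + 0 * 0 = a -> u = Num.sqrt a.
  by move=> u_ge0 <-; rewrite mulr0 addr0 -expr2 sqrtr_sqr ger0_norm.
move: e00 e11; rewrite q0 => /(sq _ p_ge0) -> e11.
by rewrite (sq _ t_ge0) // -e11 addrC.
Qed.

Lemma mabs_skew2 b : mabs (mx2 0 b (- b) 0) = mx2 `|b| 0 0 `|b|.
Proof.
rewrite /mabs trmx_mx2 mulmx_mx2 !(mul0r, mulr0, addr0, add0r, mulNr, mulrN, opprK).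
by rewrite -expr2 msqrt_scalar2 ?sqr_ge0 // sqrtr_sqr.
Qed.

Lemma mulmx_skew2 S b : S *m mx2 0 b (- b) 0 *m S^T = mx2 0 (\det S * b) (- (\det S * b)) 0.
Proof. by rewrite [S]mx2_eta trmx_mx2 !mulmx_mx2 det_mx2; congr mx2; ring. Qed.

(* The witness is (G + sqrt(det G) I) / sqrt(tr G + 2 sqrt(det G)): by Cayley-Hamilton,
   (G + sqrt(det G) I)^2 = (tr G + 2 sqrt(det G)) G. *)
Lemma msqrt_posdef G : posdef G -> psd (msqrt G) /\ msqrt G *m msqrt G = G.
Proof.
move=> G_pd; have [G10 g1_gt0 detG_gt0 detG] := posdef_mx2 G_pd.
apply: (@xgetPex _ 0 [set S | psd S /\ S *m S = G]).
set D := Num.sqrt (\det G); set T := \tr G + 2 * D.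
have D_ge0 : 0 <= D := sqrtr_ge0 _.
have D2 : D ^+ 2 = \det G by rewrite sqr_sqrtr // ltW.
have trG : \tr G = G 0 0 + G 1 1 by rewrite [G in LHS]mx2_eta mxtrace_mx2.
have T_gt0 : 0 < T by rewrite /T trG; nra.
set k := (Num.sqrt T)^-1.
have k_ge0 : 0 <= k by rewrite invr_ge0 sqrtr_ge0.
have k2T : k ^+ 2 * T = 1 by rewrite exprVn sqr_sqrtr ?ltW // mulVf ?gt_eqF.
exists (k *: (G + D%:M)); split.
  have qG x y : 0 <= G 0 0 * x ^+ 2 + 2 * G 0 1 * x * y + G 1 1 * y ^+ 2.
    rewrite -(pmulr_rge0 _ g1_gt0).
    have -> : G 0 0 * (G 0 0 * x ^+ 2 + 2 * G 0 1 * x * y + G 1 1 * y ^+ 2) =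
      (G 0 0 * x + G 0 1 * y) ^+ 2 + \det G * y ^+ 2 by rewrite detG; ring.
    by rewrite addr_ge0 ?sqr_ge0 // mulr_ge0 ?sqr_ge0 ?ltW.
  rewrite [G]mx2_eta G10 scalar_mx2 addmx_mx2 scalemx_mx2 !addr0.
  apply: psd_sym_mx2 => x y.
  have -> : k * (G 0 0 + D) * x ^+ 2 + 2 * (k * G 0 1) * x * y + k * (G 1 1 + D) * y ^+ 2
    = k * ((G 0 0 * x ^+ 2 + 2 * G 0 1 * x * y + G 1 1 * y ^+ 2) + D * (x ^+ 2 + y ^+ 2)) by ring.
  by rewrite mulr_ge0 // addr_ge0 // mulr_ge0 // addr_ge0 ?sqr_ge0.
have detD : D ^+ 2 - (G 0 0 * G 1 1 - G 0 1 ^+ 2) = 0 by rewrite D2 detG subrr.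
rewrite [G]mx2_eta G10 scalar_mx2 addmx_mx2 scalemx_mx2 !addr0 mulmx_mx2.
congr mx2.
- transitivity (k ^+ 2 * T * G 0 0 + k ^+ 2 * (D ^+ 2 - (G 0 0 * G 1 1 - G 0 1 ^+ 2))).
    by rewrite /T trG; ring.
  by rewrite detD k2T; ring.
- by transitivity (k ^+ 2 * T * G 0 1); [rewrite /T trG; ring | rewrite k2T mul1r].
- by transitivity (k ^+ 2 * T * G 0 1); [rewrite /T trG; ring | rewrite k2T mul1r].
- transitivity (k ^+ 2 * T * G 1 1 + k ^+ 2 * (D ^+ 2 - (G 0 0 * G 1 1 - G 0 1 ^+ 2))).
    by rewrite /T trG; ring.
  by rewrite detD k2T; ring.
Qed.

Lemma qform_col2_schur G x y : posdef G ->
  G 0 0 * qform G (col2 x y) = (G 0 0 * x + G 0 1 * y) ^+ 2 + \det G * y ^+ 2.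
Proof.
by case/posdef_mx2=> G10 _ _ detG; rewrite [G in qform G]mx2_eta qform_col2 G10 detG; ring.
Qed.

Lemma qform_ge_schur G (v : 'cV[R]_2) : posdef G -> \det G / G 0 0 * v 1 0 ^+ 2 <= qform G v.
Proof.
move=> G_pd; have [_ g1_gt0 detG_gt0 _] := posdef_mx2 G_pd.
rewrite [v in qform _ v]col2_eta -(ler_pM2l g1_gt0) qform_col2_schur //.
move: (v 0 0) (v 1 0) => x y.
have -> : G 0 0 * (\det G / G 0 0 * y ^+ 2) = \det G * y ^+ 2 by field; rewrite lt0r_neq0.
by rewrite lerDr sqr_ge0.
Qed.

Lemma qform_col2_argmin G y : posdef G ->
  qform G (col2 (- G 0 1 / G 0 0 * y) y) = \det G / G 0 0 * y ^+ 2.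
Proof.
move=> G_pd; have [_ g1_gt0 _ _] := posdef_mx2 G_pd.
apply: (mulfI (lt0r_neq0 g1_gt0)); rewrite qform_col2_schur //.
by field; rewrite lt0r_neq0.
Qed.

Lemma Ccost_skew r G X A b : posdef G ->
  Defs.ReM (Zmat r X) = A -> Defs.ImM (Zmat r X) = mx2 0 b (- b) 0 ->
  Ccost r G X = \tr (G *m A) + 2 * `|b| * Num.sqrt (\det G).
Proof.
move=> G_pd ReZ ImZ; have [[S_sym _] S2] := msqrt_posdef G_pd.
rewrite /Ccost ReZ ImZ mxtrace_mulC mulmxA S2; set S := msqrt G in S_sym S2 *.
rewrite -{2}S_sym mulmx_skew2 mabs_skew2 mxtrace_mx2.
by rewrite -S2 det_mulmx -expr2 sqrtr_sqr normrM; ring.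
Qed.
End RealSymmetric2.

Section Qubit.
Variable R : realType.
Local Open Scope complex_scope.
Implicit Types (a b r : R).

Lemma ReM_mxE n (W : 'M[R[i]]_n) i j : Defs.ReM W i j = complex.Re (W i j).
Proof. by rewrite mxE addcJ mulrC mulKf ?pnatr_eq0. Qed.

Lemma ImM_mxE n (W : 'M[R[i]]_n) i j : Defs.ImM W i j = complex.Im (W i j).
Proof.
rewrite mxE subcJ -mulrA [_%:C * _]mulrC mulrA mulrC mulKf //.
by rewrite mulf_neq0 ?pnatr_eq0 // eq_complex /= oner_eq0 andbF.
Qed.

Lemma half_complex : (1 / 2 : R[i]) = (1 / 2) +i* 0.
Proof. by rewrite !div1r complexr0 fmorphV rmorph_nat. Qed.

Lemma sigma1E : sigma1 R = mx2 0 ((1 / 2) +i* 0) ((1 / 2) +i* 0) 0.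
Proof.
apply/matrixP => i j; rewrite !mxE.
by case: (ord2P i) => ->; case: (ord2P j) => -> //=; rewrite half_complex.
Qed.

Lemma sigma2E : sigma2 R = mx2 0 (0 +i* (- (1 / 2))) (0 +i* (1 / 2)) 0.
Proof.
apply/matrixP => i j; rewrite !mxE.
case: (ord2P i) => ->; case: (ord2P j) => -> //=.
all: by rewrite -div1r half_complex; simpc; congr (_ +i* _); ring.
Qed.

Lemma sigma3E : sigma3 R = mx2 ((1 / 2) +i* 0) 0 0 ((- (1 / 2)) +i* 0).
Proof.
apply/matrixP => i j; rewrite !mxE.
case: (ord2P i) => ->; case: (ord2P j) => -> //=.
all: by rewrite ?mulNr half_complex; simpc; congr (_ +i* _); ring.
Qed.

Lemma rho_theta0E r : rho_theta 0 0 r = mx2 (((1 + r) / 2) +i* 0) 0 0 (((1 - r) / 2) +i* 0).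
Proof.
rewrite /rho_theta sigma1E sigma2E sigma3E scalar_mx2 half_complex !scalemx_mx2 !addmx_mx2.
congr mx2; simpc; congr (_ +i* _); ring.
Qed.

(* [hermmx a x1 x2 x3 = a I + 2 (x1 sigma1 + x2 sigma2 + x3 sigma3)], so that
   [Tr (sigma_k (hermmx a x)) = x_k]. *)
Definition hermmx (a x1 x2 x3 : R) : 'M[R[i]]_2 :=
  mx2 ((a + x3) +i* 0) (x1 -i* x2) (x1 +i* x2) ((a - x3) +i* 0).

Lemma hermitian_hermmx a (x1 x2 x3 : R) : Defs.hermitian (hermmx a x1 x2 x3).
Proof.
apply/matrixP => i j; rewrite !mxE.
by case: (ord2P i) => ->; case: (ord2P j) => -> /=; simpc.
Qed.

Lemma hermitianE (X : 'M[R[i]]_2) : Defs.hermitian X ->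
  X = hermmx ((complex.Re (X 0 0) + complex.Re (X 1 1)) / 2) (complex.Re (X 1 0))
             (complex.Im (X 1 0)) ((complex.Re (X 0 0) - complex.Re (X 1 1)) / 2).
Proof.
move/matrixP => XH; have XHE i j : (X j i)^* = X i j by have := XH i j; rewrite !mxE.
rewrite [LHS]mx2_eta -(XHE 0 1); have := XHE 0 0; have := XHE 1 1.
case: (X 0 0) => p p'; case: (X 1 1) => q q'; case: (X 1 0) => u v /= [q'E] [p'E].
have -> : p' = 0 by lra.
have -> : q' = 0 by lra.
by rewrite /hermmx; congr mx2; simpc; congr (_ +i* _); lra.
Qed.

Lemma hermitian_familyP (X : 'I_2 -> 'M[R[i]]_2) : (forall k, Defs.hermitian (X k)) ->
  exists a x1 x2 x3 : 'I_2 -> R, X = fun k => hermmx (a k) (x1 k) (x2 k) (x3 k).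
Proof. by move=> XH; do 4 eexists; apply/funext => k; apply: hermitianE. Qed.

Lemma mxtrace_Dsub_hermmx r phi (k : 'I_2) a (x1 x2 x3 : R) :
  \tr (Dsub r phi k *m hermmx a x1 x2 x3) =
  (if k == 0 then x1 else cos phi * x2 + sin phi * Num.sqrt (1 - r ^+ 2) * x3)%:C.
Proof.
rewrite /Dsub -!complexr0 sigma1E sigma2E sigma3E /hermmx.
case: (ord2P k) => -> /=; rewrite ?scalemx_mx2 ?addmx_mx2 mulmx_mx2 mxtrace_mx2;
  simpc; congr (_ +i* _); lra.
Qed.

Lemma mxtrace_rho_hermmx r a (x1 x2 x3 : R) b (y1 y2 y3 : R) :
  \tr (rho_theta 0 0 r *m hermmx a x1 x2 x3 *m hermmx b y1 y2 y3) =
  ((a + r * x3) * (b + r * y3) + x1 * y1 + x2 * y2 + (1 - r ^+ 2) * x3 * y3)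
    +i* (r * (x1 * y2 - x2 * y1)).
Proof.
rewrite rho_theta0E /hermmx !mulmx_mx2 mxtrace_mx2; simpc; congr (_ +i* _); lra.
Qed.

Section HermitianFamily.
Variables (r : R) (a x1 x2 x3 : 'I_2 -> R).
Local Notation X := (fun k => hermmx (a k) (x1 k) (x2 k) (x3 k)).

Lemma ReM_Zmat_hermmx i j : Defs.ReM (Zmat r X) i j =
  (a i + r * x3 i) * (a j + r * x3 j) + x1 i * x1 j + x2 i * x2 j + (1 - r ^+ 2) * x3 i * x3 j.
Proof. by rewrite ReM_mxE mxE mxtrace_rho_hermmx. Qed.

Lemma ImM_Zmat_hermmx i j : Defs.ImM (Zmat r X) i j = r * (x1 i * x2 j - x2 i * x1 j).
Proof. by rewrite ImM_mxE mxE mxtrace_rho_hermmx. Qed.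

Lemma feasible_hermmxE phi : feasible (Dsub r phi) X <->
  forall k, x1 k = (k == 0)%:R /\
            cos phi * x2 k + sin phi * Num.sqrt (1 - r ^+ 2) * x3 k = (k == 1)%:R.
Proof.
have nat_complex (n : nat) : (n%:R : R[i]) = (n%:R : R)%:C by rewrite rmorph_nat.
have tr k j : \tr (Dsub r phi k *m X j) = (j == k)%:R <->
    (if k == 0 then x1 j else cos phi * x2 j + sin phi * Num.sqrt (1 - r ^+ 2) * x3 j)
    = (j == k)%:R.
  by rewrite mxtrace_Dsub_hermmx nat_complex; split => [/complexI|->].
split => [[_ trDX] j | xE].
  by have := trDX j 0; have := trDX j 1; rewrite !tr /=; case: (ord2P j) => ->.
split => [j|j k]; first exact: hermitian_hermmx.
by apply/tr; case: (xE j) => -> ->; case: (ord2P k) => ->; case: (ord2P j) => ->.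
Qed.
End HermitianFamily.
End Qubit.

Lemma rotation_dot (T : comPzRingType) (c s p q p' q' : T) : c ^+ 2 + s ^+ 2 = 1 ->
  p * p' + q * q' = (c * p + s * q) * (c * p' + s * q') + (- s * p + c * q) * (- s * p' + c * q').
Proof. by move=> cs; rewrite -[LHS]mul1r -cs; ring. Qed.

Section Frame.
Variables (R : realType) (r phi : R).
Hypotheses (r_ge0 : 0 <= r) (r_lt1 : r < 1).
Local Notation c := (cos phi).
Local Notation s := (sin phi).
Local Notation sg := (Num.sqrt (1 - r ^+ 2)).

Let sg2 : sg ^+ 2 = 1 - r ^+ 2.
Proof. by rewrite sqr_sqrtr // subr_ge0 expr_le1 // ltW. Qed.

Let sgK (z : R) : sg * (z / sg) = z.
Proof. by rewrite mulrC divfK // sqrtr_eq0 -ltNge subr_gt0 expr_lt1. Qed.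

(* Rotating (x2 k, sg * x3 k) by phi turns its first coordinate into the constraint value
   (k == 1) and its second into the free coordinate v k, whence Re Z = I + y y^T + v v^T. *)
Lemma Ccost_hermmx G (a x1 x2 x3 : 'I_2 -> R) :
  let X := fun k => hermmx (a k) (x1 k) (x2 k) (x3 k) in
  posdef G -> feasible (Dsub r phi) X ->
  Ccost r G X = \tr G + qform G (\col_k (a k + r * x3 k))
                + qform G (\col_k (- s * x2 k + c * (sg * x3 k)))
                + 2 * r * `|x2 1| * Num.sqrt (\det G).
Proof.
move=> X G_pd /feasible_hermmxE xE; set y := \col_k _; set v := \col_k _.
have x1E k : x1 k = (k == 0)%:R := (xE k).1.
have x23E k : c * x2 k + s * (sg * x3 k) = (k == 1)%:R by rewrite mulrA; exact: (xE k).2.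
rewrite (@Ccost_skew _ r G X (1%:M + y *m y^T + v *m v^T) (r * x2 1) G_pd).
- by rewrite !mulmxDr !mxtraceD mulmx1 !mxtrace_mul_outer normrM (ger0_norm r_ge0); ring.
- apply/matrixP => i j; rewrite ReM_Zmat_hermmx !mxE !big_ord1 !mxE.
  have -> : (1 - r ^+ 2) * x3 i * x3 j = (sg * x3 i) * (sg * x3 j).
    by rewrite mulrACA -expr2 sg2 mulrA.
  have := rotation_dot (x2 i) (sg * x3 i) (x2 j) (sg * x3 j) (cos2Dsin2 phi).
  rewrite !x23E !x1E.
  by case: (ord2P i) => ->; case: (ord2P j) => -> /=; lra.
- apply/matrixP => i j; rewrite ImM_Zmat_hermmx !x1E mxE.
  by case: (ord2P i) => ->; case: (ord2P j) => -> /=; ring.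
Qed.

Lemma Ccost_feasible G X : posdef G -> feasible (Dsub r phi) X ->
  exists y v : 'cV[R]_2,
  Ccost r G X = \tr G + qform G y + qform G v + 2 * r * `|c - s * v 1 0| * Num.sqrt (\det G).
Proof.
move=> G_pd X_feas; have [a [x1 [x2 [x3 XE]]]] := hermitian_familyP X_feas.1.
rewrite XE in X_feas *.
exists (\col_k (a k + r * x3 k)), (\col_k (- s * x2 k + c * (sg * x3 k))).
rewrite (Ccost_hermmx G_pd X_feas) mxE; congr (_ + _ * `|_| * _).
have [_] := (feasible_hermmxE _ _ _ _ _ _).1 X_feas 1; rewrite /= => x23E.
transitivity (c * (c * x2 1 + s * sg * x3 1) - s * (- s * x2 1 + c * (sg * x3 1))).
  by rewrite -[LHS]mul1r -(cos2Dsin2 phi); ring.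
by rewrite x23E mulr1.
Qed.

Lemma Ccost_attained G (v : 'cV[R]_2) : posdef G -> exists X, feasible (Dsub r phi) X /\
  Ccost r G X = \tr G + qform G v + 2 * r * `|c - s * v 1 0| * Num.sqrt (\det G).
Proof.
move=> G_pd.
pose x2 (k : 'I_2) := c * (k == 1)%:R - s * v k 0.
pose x3 (k : 'I_2) := (s * (k == 1)%:R + c * v k 0) / sg.
pose X k := hermmx (- r * x3 k) (k == 0)%:R (x2 k) (x3 k).
have X_feas : feasible (Dsub r phi) X.
  apply/feasible_hermmxE => k; split => //.
  rewrite -mulrA sgK /x2; transitivity ((c ^+ 2 + s ^+ 2) * (k == 1)%:R); first ring.
  by rewrite cos2Dsin2 mul1r.
exists X; split => //; rewrite (Ccost_hermmx G_pd X_feas).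
have -> : \col_k (- r * x3 k + r * x3 k) = 0 :> 'cV_2.
  by apply/matrixP => i j; rewrite !mxE mulNr addNr.
have -> : \col_k (- s * x2 k + c * (sg * x3 k)) = v.
  apply/matrixP => i j; rewrite mxE sgK (ord1 j) /x2.
  transitivity ((c ^+ 2 + s ^+ 2) * v i 0); first ring.
  by rewrite cos2Dsin2 mul1r.
by rewrite /qform mulmx0 mxE addr0 /x2 eqxx mulr1.
Qed.
End Frame.

Section TauMinimization.
Variables (R : realType) (r c s g1 D : R).
Hypotheses (r_ge0 : 0 <= r) (c_ge0 : 0 <= c) (s_ge0 : 0 <= s) (cs1 : c ^+ 2 + s ^+ 2 = 1)
  (g1_gt0 : 0 < g1) (D_gt0 : 0 < D).

Definition tau_cost (tau : R) : R := D ^+ 2 / g1 * tau ^+ 2 + 2 * r * `|c - s * tau| * D.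

(* [tau_cost] is convex: it is minimal at its critical point tau = r s g1 / D when there
   c - s tau > 0, and at the kink tau = c / s otherwise. *)
Definition holevo_excess : R :=
  if r * g1 * s ^+ 2 < D * c then 2 * r * c * D - r ^+ 2 * s ^+ 2 * g1
  else D ^+ 2 / g1 * (c / s) ^+ 2.

Let s_gt0 : ~~ (r * g1 * s ^+ 2 < D * c) -> 0 < s.
Proof.
rewrite -leNgt lt0r s_ge0 andbT => cond; apply: contraTneq cond => s0.
move: cs1; rewrite s0 expr0n /= mulr0 addr0 -ltNge => /eqP; rewrite sqrf_eq1.
by case/orP=> /eqP c1; rewrite c1 ?mulr1 //; move: c_ge0; rewrite c1; lra.
Qed.

Lemma holevo_excess_le tau : holevo_excess <= tau_cost tau.
Proof.
have := ler_norm (c - s * tau); have := normr_ge0 (c - s * tau).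
rewrite /holevo_excess /tau_cost; set A := `|_|; case: ifP => [_ | /negbT cond] A_ge0 A_ge.
  have : 0 <= (D * tau - r * s * g1) ^+ 2 / g1 by rewrite divr_ge0 ?sqr_ge0 ?ltW.
  have -> : (D * tau - r * s * g1) ^+ 2 / g1 =
    D ^+ 2 / g1 * tau ^+ 2 - 2 * r * D * s * tau + r ^+ 2 * s ^+ 2 * g1.
    by field; rewrite lt0r_neq0.
  have : 2 * r * D * (c - s * tau) <= 2 * r * D * A.
    by apply: ler_wpM2l => //; rewrite !mulr_ge0 // ltW.
  lra.
have gs_gt0 : 0 < g1 * s ^+ 2 by rewrite mulr_gt0 ?exprn_gt0 ?s_gt0.
rewrite -(ler_pM2l gs_gt0).
have -> : g1 * s ^+ 2 * (D ^+ 2 / g1 * (c / s) ^+ 2) = D ^+ 2 * c ^+ 2.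
  by field; rewrite !lt0r_neq0 ?s_gt0.
have -> : g1 * s ^+ 2 * (D ^+ 2 / g1 * tau ^+ 2 + 2 * r * A * D) =
    D ^+ 2 * (c - (c - s * tau)) ^+ 2 + 2 * (r * g1 * s ^+ 2) * D * A.
  by field; rewrite lt0r_neq0.
move: cond; rewrite -leNgt => cond; have D_ge0 := ltW D_gt0.
have : 0 <= D ^+ 2 * (c - s * tau) ^+ 2 by rewrite mulr_ge0 ?sqr_ge0.
have : 0 <= D * c * D * (A - (c - s * tau)) by rewrite !mulr_ge0 // subr_ge0.
have : D * c * (D * A) <= r * g1 * s ^+ 2 * (D * A) by rewrite ler_wpM2r // mulr_ge0.
lra.
Qed.

Lemma holevo_excess_attained : exists tau, tau_cost tau = holevo_excess.
Proof.
rewrite /holevo_excess /tau_cost; case: ifP => [cond | /negbT/s_gt0 s_pos].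
  exists (r * s * g1 / D).
  have -> : c - s * (r * s * g1 / D) = (D * c - r * g1 * s ^+ 2) / D.
    by field; rewrite lt0r_neq0.
  rewrite ger0_norm ?divr_ge0 ?subr_ge0 ?ltW //.
  by field; rewrite !lt0r_neq0.
by exists (c / s); rewrite [s * (c / s)]mulrC divfK ?lt0r_neq0 // subrr normr0 mulr0 mul0r addr0.
Qed.
End TauMinimization.

Theorem mainTheorem10 (R : realType) (r phi : R) (G : 'M[R]_2) :
  0 < r < 1 ->
  0 <= phi <= pi / 2 ->
  posdef G ->
  holevo_bound_is r (Dsub r phi) G
    (if r * G 0 0 * sin phi ^+ 2 < Num.sqrt (\det G) * cos phi
     then \tr G + 2 * r * cos phi * Num.sqrt (\det G)
          - r ^+ 2 * sin phi ^+ 2 * G 0 0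
     else \tr G + \det G / G 0 0 * (cos phi / sin phi) ^+ 2).
Proof.
move=> /andP[r_gt0 r_lt1] /andP[phi_ge0 phi_le] G_pd; have r_ge0 := ltW r_gt0.
have [_ g1_gt0 detG_gt0 _] := posdef_mx2 G_pd.
have pi_gt0 := pi_gt0 R.
have c_ge0 : 0 <= cos phi by apply: cos_ge0_pihalf; apply/andP; split; lra.
have s_ge0 : 0 <= sin phi by apply: sin_ge0_pi; rewrite phi_ge0 /=; lra.
set D := Num.sqrt (\det G).
have D_gt0 : 0 < D by rewrite sqrtr_gt0.
have D2 : \det G = D ^+ 2 by rewrite sqr_sqrtr // ltW.
pose excess := holevo_excess r (cos phi) (sin phi) (G 0 0) D.
have -> : (if r * G 0 0 * sin phi ^+ 2 < D * cos phi
           then \tr G + 2 * r * cos phi * D - r ^+ 2 * sin phi ^+ 2 * G 0 0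
           else \tr G + \det G / G 0 0 * (cos phi / sin phi) ^+ 2) = \tr G + excess.
  by rewrite /excess /holevo_excess D2; case: ifP => _; ring.
split.
  have [tau tauE] := holevo_excess_attained r c_ge0 s_ge0 (cos2Dsin2 phi) g1_gt0 D_gt0.
  have [X [X_feas XE]] := Ccost_attained phi r_ge0 r_lt1 (col2 (- G 0 1 / G 0 0 * tau) tau) G_pd.
  exists X; split => //; rewrite XE qform_col2_argmin // -/D /excess -tauE /tau_cost D2 mxE /=; ring.
move=> X X_feas; have [y [v ->]] := Ccost_feasible r_ge0 r_lt1 G_pd X_feas.
have := holevo_excess_le r_ge0 c_ge0 s_ge0 (cos2Dsin2 phi) g1_gt0 D_gt0 (v 1 0).
have := qform_ge_schur v G_pd; have : 0 <= qform G y := (posdef_psd G_pd).2 y.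
rewrite -/D /excess /tau_cost D2; lra.
Qed.
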